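(* For any choice of $(\hat\imath,\hat\jmath)\in\mathcal E$ defining $B_1$, the matrix $B_1$ is invertible, and $$\mathfrak d(i,\ell)=\frac{(e^{\mathsf T}B_1^{-1})_\ell}{(e^{\mathsf T}B_1^{-1})_i}\qquad\forall\,i,\ell\in\mathcal I.$$ Moreover $(e^{\mathsf T}B_1^{-1})_i>0$ for all $i\in\mathcal I$.
   Context: Network: $\mathcal I=\{1,\dots,I\}$, $\mathcal J=\{1,\dots,J\}$, edges $\mathcal E\subset\mathcal I\times\mathcal J$ with the bipartite graph $\mathcal G=(\mathcal I\cup\mathcal J,\mathcal E)$ a tree; $i\sim j$ iff $(i,j)\in\mathcal E$; $\mathcal J(i)=\{j:i\sim j\}$, $\mathcal I(j)=\{i:i\sim j\}$; $\mathbb R^{\mathcal G}$ denotes arrays in $\mathbb R^{I\times J}$ vanishing off $\mathcal E$. Service rates $\mu_{ij}>0$ for $i\sim j$. $e$ is the all-ones vector. Let $\mathcal D=\{(\alpha,\beta)\in\mathbb R^I\times\mathbb R^J:\sum_i\alpha_i=\sum_j\beta_j\}$ and $\Psi:\mathcal D\to\mathbb R^{\mathcal G}$ the unique linear map with $\sum_j\Psi_{ij}(\alpha,\beta)=\alpha_i$, $\sum_i\Psi_{ij}(\alpha,\beta)=\beta_j$. For $(\hat\imath,\hat\jmath)\in\mathcal E$, $B_1\in\mathbb R^{I\times I}$ and $B_2\in\mathbb R^{I\times J}$ are the unique matrices with column $\hat\jmath$ of $B_2$ zero and $\sum_{j\in\mathcal J(i)}\mu_{ij}\Psi_{ij}(\alpha,\beta)=(B_1\alpha+B_2\beta)_i$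 for all $i$ and $(\alpha,\beta)\in\mathcal D$. Gains: for $i\ne i'$ in $\mathcal I$ with unique shortest path $(i_1,j_1,i_2,\dots,j_{m-1},i_m)$ in $\mathcal G$ from $i=i_1$ to $i'=i_m$, $\mathfrak d(i,i'):=\prod_{k=1}^{m-1}\mu_{i_kj_k}/\mu_{i_{k+1}j_k}$; and $\mathfrak d(i,i):=1$. *)

From mathcomp Require Import all_boot all_order all_algebra.
Set Implicit Arguments. Unset Strict Implicit. Unset Printing Implicit Defensive.
Import Order.TTheory GRing.Theory Num.Theory.
Local Open Scope ring_scope.

Section Network.
Variables (I J : nat) (E : 'I_I -> 'I_J -> bool).

Definition vtx := ('I_I + 'I_J)%type.

Definition adj : rel vtx := fun u v =>
  match u, v with
  | inl i, inr j => E i j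
  | inr j, inl i => E i j
  | _, _ => false
  end.

Definition graph_connected : Prop := forall u v : vtx, connect adj u v.
Definition graph_acyclic : Prop :=
  forall c : seq vtx, uniq c -> cycle adj c -> (size c < 3)%N.
Definition is_tree : Prop := graph_connected /\ graph_acyclic.

(* arrays in R^G : vanishing off E *)
Definition in_RG (R : pzRingType) (x : 'M[R]_(I, J)) : Prop :=
  forall i j, ~~ E i j -> x i j = 0.

(* B1, B2 defining property for the choice (ih, jh):
   column jh of B2 is zero, and for every (al, be) in D,
   sum_{j in J(i)} mu_ij Psi_ij(al,be) = (B1 al + B2 be)_i.
   Psi(al,be) is the (unique, G being a tree) x in R^G with row sums al and
   column sums be, so we quantify over all such x. *)
Definition B_matrices (R : pzRingType) (mu : 'M[R]_(I, J)) (jh : 'I_J)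
    (B1 : 'M[R]_I) (B2 : 'M[R]_(I, J)) : Prop :=
  (forall i, B2 i jh = 0) /\
  forall (x : 'M[R]_(I, J)) (al : 'cV[R]_I) (be : 'cV[R]_J),
    in_RG x ->
    (forall i, \sum_(j < J) x i j = al i 0) ->
    (forall j, \sum_(i < I) x i j = be j 0) ->
    forall i, \sum_(j < J | E i j) mu i j * x i j = (B1 *m al + B2 *m be) i 0.

(* gain along a path (i = i_1) :: [inr j_1; inl i_2; ...; inr j_{m-1}; inl i_m]:
   prod_k mu_{i_k j_k} / mu_{i_{k+1} j_k} *)
Fixpoint path_gain (R : fieldType) (mu : 'M[R]_(I, J)) (i : 'I_I) (p : seq vtx)
    : R :=
  match p with
  | inr j :: inl i' :: p' => mu i j / mu i' j * path_gain mu i' p'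
  | _ => 1
  end.

Definition shortest_path (u v : vtx) (p : seq vtx) : Prop :=
  path adj u p /\ last u p = v /\
  forall q : seq vtx, path adj u q -> last u q = v -> (size p <= size q)%N.

(* the gain d(i,i') of the paper: for i <> i' it is the path gain along the
   unique shortest path; for i = i' the shortest path is empty and gain = 1 *)
Definition is_gain (R : fieldType) (mu : 'M[R]_(I, J)) (i i' : 'I_I) (g : R)
    : Prop :=
  forall p, shortest_path (inl i) (inl i') p -> path_gain mu i p = g.

End Network.

From mathcomp Require Import all_boot all_order all_algebra.
From mathcomp Require Import ring.
Set Implicit Arguments. Unset Strict Implicit. Unset Printing Implicit Defensive.
Import Order.TTheory GRing.Theory Num.Theory.
Local Open Scope ring_scope.

(* Testing the defining identity of (B1, B2) on the flow that puts
   a unit mass on a single edge (i0, j0) shows that column i0 of B1 plus column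
   j0 of B2 equals mu_{i0 j0} times the unit vector at i0.  Hence, for every row
   vector w with w B1 = a e^T, the numbers c_j := a + (w B2)_j satisfy the
   "potential" relation  w_i mu_ij = c_j  on every edge, and c_jh = a because
   column jh of B2 vanishes.  Propagating along the connected graph G from the
   vertex jh then gives:
   - a = 0 forces w = 0 (mu is nonzero on edges), so B1 is invertible;
   - for w = e^T B1^-1 (a = 1) all w_i are positive (mu is positive on edges);
   - along any path i = i_1, j_1, ..., i_m = l the gain telescopes:
     mu_{i_k j_k} / mu_{i_{k+1} j_k} = w_{i_{k+1}} / w_{i_k}, so it equals
     w_l / w_i.  In particular this holds for the shortest path. *)

Lemma connect_invariant I J (E : 'I_I -> 'I_J -> bool) (P : vtx I J -> Prop)
    (s t : vtx I J) :
  (forall u v, P u -> adj E u v -> P v) -> P s -> connect (adj E) s t -> P t.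
Proof.
move=> step Ps /connectP [p pth ->].
elim: p s Ps pth => [|a p IH] s Ps //= /andP [sa pa].
exact: IH (step _ _ Ps sa) pa.
Qed.

Section EdgeIdentity.
Variables (R : pzRingType) (I J : nat) (E : 'I_I -> 'I_J -> bool).
Variables (mu : 'M[R]_(I, J)) (jh : 'I_J) (B1 : 'M[R]_I) (B2 : 'M[R]_(I, J)).
Hypothesis HB : B_matrices E mu jh B1 B2.

(* The flow concentrated on one edge: B1 e_{i0} + B2 e_{j0} = mu_{i0 j0} e_{i0}. *)
Lemma B_columns_edge (i0 : 'I_I) (j0 : 'I_J) : E i0 j0 ->
  forall i, B1 i i0 + B2 i j0 = (i == i0)%:R * mu i0 j0.
Proof.
move=> Eij i.
have flow_RG : in_RG E (delta_mx i0 j0 : 'M[R]_(I, J)).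
  move=> i1 j nE; rewrite mxE; case: eqP => [e1|//]; case: eqP => [e2|//].
  by move: nE; rewrite e1 e2 Eij.
have rows i1 : \sum_(j < J) (delta_mx i0 j0 : 'M[R]_(I, J)) i1 j
               = (delta_mx i0 0 : 'cV[R]_I) i1 0.
  rewrite (bigD1 j0) //= big1 ?addr0; first by rewrite !mxE !eqxx ?andbT.
  by move=> j nj; rewrite mxE (negbTE nj) andbF.
have cols j : \sum_(i1 < I) (delta_mx i0 j0 : 'M[R]_(I, J)) i1 j
              = (delta_mx j0 0 : 'cV[R]_J) j 0.
  rewrite (bigD1 i0) //= big1 ?addr0; first by rewrite !mxE !eqxx ?andbT.
  by move=> i1 ni; rewrite mxE (negbTE ni).
have [_ Hflow] := HB.
have := Hflow _ _ _ flow_RG rows cols i.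
rewrite -!colE !mxE => <-.
rewrite big_mkcond (bigD1 j0) //= big1 ?addr0; last first.
  by move=> j nj; rewrite mxE (negbTE nj) andbF mulr0; case: (E i j).
rewrite mxE eqxx andbT; case: eqVneq => [->|_]; first by rewrite Eij mulr1 mul1r.
by rewrite mulr0 mul0r; case: (E i j0).
Qed.

Lemma B_rows_edge (i0 : 'I_I) (j0 : 'I_J) (w : 'rV[R]_I) : E i0 j0 ->
  w 0 i0 * mu i0 j0 = (w *m B1) 0 i0 + (w *m B2) 0 j0.
Proof.
move=> Eij; rewrite !mxE -big_split (bigD1 i0) //= big1 ?addr0.
  by rewrite -mulrDr B_columns_edge // eqxx mul1r.
by move=> i ni; rewrite -mulrDr B_columns_edge // (negbTE ni) mul0r mulr0.
Qed.

Lemma B2_col_jh (w : 'rV[R]_I) : (w *m B2) 0 jh = 0.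
Proof. by rewrite mxE big1 // => i _; rewrite HB.1 mulr0. Qed.

End EdgeIdentity.

Definition potential (R : pzRingType) I J (E : 'I_I -> 'I_J -> bool)
    (mu : 'M[R]_(I, J)) (v : 'I_I -> R) (c : 'I_J -> R) : Prop :=
  forall i j, E i j -> v i * mu i j = c j.

Lemma B_potential (R : pzRingType) I J (E : 'I_I -> 'I_J -> bool)
    (mu : 'M[R]_(I, J)) jh B1 B2 (w : 'rV[R]_I) (a : R) :
  B_matrices E mu jh B1 B2 -> w *m B1 = const_mx a ->
  potential E mu (fun i => w 0 i) (fun j => a + (w *m B2) 0 j).
Proof. by move=> HB wB1 i j Eij; rewrite (B_rows_edge HB) // wB1 mxE. Qed.

Lemma potential_eq0 (R : idomainType) I J (E : 'I_I -> 'I_J -> bool)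
    (mu : 'M[R]_(I, J)) v c (j0 : 'I_J) :
  graph_connected E -> (forall i j, E i j -> mu i j != 0) ->
  potential E mu v c -> c j0 = 0 -> forall i, v i = 0.
Proof.
move=> conn mu_neq0 pot cj0 i.
pose P x := match x with inl i => v i = 0 | inr j => c j = 0 end.
apply: (@connect_invariant _ _ E P (inr j0) (inl i)) (conn _ _) => //.
case=> [i1|j1] [i2|j2] //= P1 e; first by rewrite -(pot _ _ e) P1 mul0r.
by move: P1; rewrite -(pot _ _ e) => /eqP; rewrite mulf_eq0 (negbTE (mu_neq0 _ _ e)) orbF => /eqP.
Qed.

Lemma potential_gt0 (R : numDomainType) I J (E : 'I_I -> 'I_J -> bool)
    (mu : 'M[R]_(I, J)) v c (j0 : 'I_J) :
  graph_connected E -> (forall i j, E i j -> 0 < mu i j) ->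
  potential E mu v c -> 0 < c j0 -> forall i, 0 < v i.
Proof.
move=> conn mu_gt0 pot cj0 i.
pose P x := match x with inl i => 0 < v i | inr j => 0 < c j end.
apply: (@connect_invariant _ _ E P (inr j0) (inl i)) (conn _ _) => //.
case=> [i1|j1] [i2|j2] //= P1 e; first by rewrite -(pot _ _ e) mulr_gt0 ?mu_gt0.
by move: P1; rewrite -(pot _ _ e) pmulr_lgt0 ?mu_gt0.
Qed.

Lemma path_gain_potential (R : fieldType) I J (E : 'I_I -> 'I_J -> bool)
    (mu : 'M[R]_(I, J)) v c :
  potential E mu v c -> (forall i, v i != 0) ->
  (forall i j, E i j -> mu i j != 0) ->
  forall p i l, path (adj E) (inl i) p -> last (inl i) p = inl l ->
  path_gain mu i p = v l / v i.
Proof.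
move=> pot v_neq0 mu_neq0 p; have [n] := ubnP (size p).
elim: n p => // n IH [|[k0|j] [|[k|j'] q]] //= sz i l; last by rewrite andbF.
  by move=> _ [->]; rewrite divff.
case/and3P=> Eij Ekj pq lq.
have q_lt : (size q < n)%N by move: sz; rewrite ltnS => /ltnW.
rewrite (IH q q_lt k l pq lq).
have mu_ij : mu i j = v k * mu k j / v i.
  by apply: (mulfI (v_neq0 i)); rewrite pot // pot // mulrC divfK.
by rewrite mu_ij; field; rewrite !v_neq0 mu_neq0.
Qed.

Lemma unitmx_of_left_kernel (F : fieldType) n (A : 'M[F]_n) :
  (forall u : 'rV[F]_n, u *m A = 0 -> u = 0) -> A \in unitmx.
Proof.
move=> ker0; rewrite -row_free_unit -kermx_eq0; apply/eqP/row_matrixP => i.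
by rewrite row0; apply: ker0; rewrite -row_mul mulmx_ker row0.
Qed.

Theorem theorem3 (R : realFieldType) (I J : nat) (E : 'I_I -> 'I_J -> bool)
  (mu : 'M[R]_(I, J)) (ih : 'I_I) (jh : 'I_J)
  (B1 : 'M[R]_I) (B2 : 'M[R]_(I, J)) :
  is_tree E ->
  (forall i j, E i j -> 0 < mu i j) ->
  E ih jh ->
  B_matrices E mu jh B1 B2 ->
  B1 \in unitmx /\
  (forall i l : 'I_I,
     is_gain E mu i l
       (((const_mx 1 : 'rV[R]_I) *m invmx B1) 0 l / ((const_mx 1 : 'rV[R]_I) *m invmx B1) 0 i)) /\
  (forall i : 'I_I, 0 < ((const_mx 1 : 'rV[R]_I) *m invmx B1) 0 i).
Proof.
move=> [conn _] mu_gt0 _ HB.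
have mu_neq0 i j : E i j -> mu i j != 0 by move/mu_gt0/lt0r_neq0.
have B1_unit : B1 \in unitmx.
  apply: unitmx_of_left_kernel => u uB1; apply/rowP => i; rewrite mxE.
  have pot := B_potential HB (uB1 : u *m B1 = const_mx 0).
  by apply: (potential_eq0 (j0 := jh) conn mu_neq0 pot); rewrite (B2_col_jh HB) addr0.
set v := (const_mx 1 : 'rV[R]_I) *m invmx B1.
have pot := B_potential HB (mulmxKV B1_unit (const_mx 1) : v *m B1 = const_mx 1).
have v_gt0 : forall i, 0 < v 0 i.
  by apply: (potential_gt0 (j0 := jh) conn mu_gt0 pot); rewrite (B2_col_jh HB) addr0 ltr01.
split=> //; split=> // i l p [pth [last_p _]].
apply: (path_gain_potential pot _ mu_neq0 pth last_p) => k.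
exact: lt0r_neq0.
Qed.
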